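(* Let $G$ be the Boolean group of all finite subsets of $\mathbb{Z}$ with symmetric difference as the group operation (identity $\emptyset$), and let $$A=G\setminus\{\{x,y\}: x,y\in\mathbb{Z},\ 0\ne x-y\in\{z^3:z\in\mathbb{Z}\}\}.$$ Then: (i) $A$ is a Ramsey $\vec m$-product subset of $G$ for every $\vec m=(m_1,\dots,m_k)\in(2\mathbb{Z}+1)^k$ with $k\ge2$; (ii) there is no large subset $B$ of $G$ with $BB^{-1}\subseteq A$; (iii) $A$ is not a neighbourhood of the identity in any totally bounded group topology on $G$.
   Context: A subset $A$ of a group $G$ is a Ramsey $\vec m$-product subset, for $\vec m\in\mathbb{Z}^k$, if every infinite $X\subseteq G$ contains pairwise distinct $x_1,\dots,x_k\in X$ with $x_{\sigma(1)}^{m_1}\cdots x_{\sigma(k)}^{m_k}\in A$ for every $\sigma\in S_k$. A subset $B$ of $G$ is large if $G=FB$ for some finite $F\subseteq G$. *)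

From HB Require Import structures.
From mathcomp Require Import all_boot all_order all_algebra all_fingroup.
From Stdlib Require Lists.List.
Set Implicit Arguments. Unset Strict Implicit. Unset Printing Implicit Defensive.
Import Order.TTheory GRing.Theory Num.Theory.

Section GroupNotions.
Variables (T : Type) (mul : T -> T -> T) (inv : T -> T) (e : T).

Definition zpow (x : T) (m : int) : T :=
  match m with
  | Posz n => iter n (mul x) e
  | Negz n => inv (iter n.+1 (mul x) e)
  end.

Definition finite_set (X : T -> Prop) : Prop :=
  exists s : list T, forall x, X x -> Stdlib.Lists.List.In x s.

Definition perm_product (k : nat) (m : 'I_k -> int) (x : 'I_k -> T)
    (s : {perm 'I_k}) : T :=
  foldr mul e [seq zpow (x (s i)) (m i) | i <- enum 'I_k].

Definition ramsey_product_subset (k : nat) (m : 'I_k -> int) (A : T -> Prop) :=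
  forall X : T -> Prop, ~ finite_set X ->
    exists x : 'I_k -> T,
      injective x /\ (forall i, X (x i)) /\
      (forall s : {perm 'I_k}, A (perm_product m x s)).

Definition large (B : T -> Prop) : Prop :=
  exists F : list T, forall g, exists f b, Stdlib.Lists.List.In f F /\ B b /\ g = mul f b.

Definition BBinv_sub (B A : T -> Prop) : Prop :=
  forall b1 b2, B b1 -> B b2 -> A (mul b1 (inv b2)).

Definition is_topology (open : (T -> Prop) -> Prop) : Prop :=
  open (fun _ => True) /\
  (forall (I : Type) (U : I -> T -> Prop),
      (forall i, open (U i)) -> open (fun x => exists i, U i x)) /\
  (forall U V, open U -> open V -> open (fun x => U x /\ V x)).

Definition is_group_topology (open : (T -> Prop) -> Prop) : Prop :=
  is_topology open /\
  (forall U a b, open U -> U (mul a b) ->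
     exists V W, open V /\ open W /\ V a /\ W b /\
       (forall v w, V v -> W w -> U (mul v w))) /\
  (forall U, open U -> open (fun x => U (inv x))).

Definition neighbourhood_of_e (open : (T -> Prop) -> Prop) (A : T -> Prop) :=
  exists U, open U /\ U e /\ (forall x, U x -> A x).

Definition totally_bounded (open : (T -> Prop) -> Prop) : Prop :=
  forall U, neighbourhood_of_e open U -> large U.

End GroupNotions.

(* A finite subset is represented by its strictly increasing list.      *)

Definition finZset := {s : seq int | sorted <%O s}.

Definition fmem (g : finZset) (z : int) : bool := z \in sval g.

Definition fsymdiff (g h : finZset) : finZset :=
  exist _ (sort <=%O (undup ([seq z <- sval g | z \notin sval h] ++
                             [seq z <- sval h | z \notin sval g])))
        (eq_ind_r is_true (undup_uniq _) (sort_lt_sorted _)).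

Definition finZinv (g : finZset) : finZset := g.

Definition fempty : finZset := exist _ [::] (erefl true).

Definition A_cube (g : finZset) : Prop :=
  ~ (exists x y : int, (x - y != 0)%R /\ (exists z : int, (x - y = z ^+ 3)%R) /\
       (forall w, fmem g w = (w == x) || (w == y))).

(* (i) With odd exponents every permuted product of [x_1, ..., x_k] in the
   Boolean group is the symmetric difference [x_1 + ... + x_k], so it suffices
   to find distinct [x_i] in [X] whose sum is not a cube pair [{x, y}] with
   [x - y] a nonzero cube.  Fix [k - 2] of them, with sum [s].  If [s + u + v]
   were a cube pair for all distinct [u], [v] in the rest of [X], then for fixed
   [u0 != v1] the cube pairs [s + u0 + g] and [s + v1 + g] would differ by the
   nonempty bounded set [u0 + v1]; as distinct cubes are far apart
   ([|a| <= |a^3 - c^3|]), this confines every [g] to a finite set.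
   (ii) If [G = F B] with [F] finite, colour [n] by some [f] in [F] with
   [{n} \in f B].  By the polynomial van der Waerden theorem, proved by Walters'
   colour-focusing argument and PET induction, some [a] and [a + z^3] get the
   same colour [f], and then [b_1 b_2^-1 = {a, a + z^3}] is a cube pair.
   (iii) A neighbourhood of the identity in a totally bounded group topology
   contains [B B^-1] for a large open [B], so (ii) applies. *)

From HB Require Import structures.
From mathcomp Require Import all_boot all_order all_algebra all_fingroup.
From mathcomp Require Import zify ring.
From Stdlib Require Lists.List.
From Stdlib Require Import Classical_Prop.
From Stdlib Require IndefiniteDescription.

Set Implicit Arguments. Unset Strict Implicit. Unset Printing Implicit Defensive.
Import Order.TTheory GRing.Theory Num.Theory.

Lemma In_memP (T : eqType) (x : T) (s : seq T) : reflect (List.In x s) (x \in s).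
Proof.
elim: s => [|y s IH] /=; first by right.
rewrite in_cons; apply: (iffP orP) => [[/eqP ->|/IH]|[->|/IH]]; by [left|right].
Qed.

Lemma nonfinite_notin (T : eqType) (Y : T -> Prop) (l : seq T) :
  ~ finite_set Y -> exists2 g, Y g & g \notin l.
Proof.
move=> infY; apply: NNPP => no_g; apply: infY; exists l => g Yg.
by apply/In_memP; apply: contra_notT no_g => g_l; exists g.
Qed.

Lemma nonfinite_uniq_seq (T : eqType) (X : T -> Prop) n : ~ finite_set X ->
  exists l : seq T, [/\ size l = n, uniq l & forall g, g \in l -> X g].
Proof.
move=> infX; elim: n => [|n [l [size_l uniq_l lX]]]; first by exists [::].
have [g Xg g_l] := nonfinite_notin l infX.
exists (g :: l); split; rewrite /= ?size_l ?g_l //.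
by move=> h; rewrite inE => /orP[/eqP ->|/lX].
Qed.

Definition dominated (n : nat) (f g : nat -> nat) :=
  exists2 j, j < n & f j < g j /\ forall i, j < i < n -> f i <= g i.

Lemma dominated_ind (T : Type) (w : T -> nat -> nat) (n : nat) (Phi : T -> Prop) :
  (forall x, (forall y, dominated n (w y) (w x) -> Phi y) -> Phi x) -> forall x, Phi x.
Proof.
elim: n Phi => [|n IHn] Phi step; first by move=> x; apply: step => y [].
suff bounded a x : w x n <= a -> Phi x by move=> x; apply: (bounded _ x (leqnn _)).
elim/ltn_ind: a x => a IHa; apply: (IHn (fun x => w x n <= a -> Phi x)) => x IHx xa.
apply: step => y [j]; rewrite ltnS leq_eqVlt => /orP[/eqP-> | jn] [lt_j le_above].
  by apply: (IHa (w y n)) => //; apply: leq_trans xa.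
apply: IHx; last by apply: leq_trans (le_above n _) xa; rewrite jn leqnn.
exists j => //; split=> // i /andP[ji i_n]; apply: le_above; by rewrite ji ltnW.
Qed.

Lemma exists_argmin_seq (T : eqType) (f : T -> nat) (s : seq T) :
  s != [::] -> exists2 x, x \in s & forall y, y \in s -> f x <= f y.
Proof.
elim: s => // x s IH _; have [->|/IH[y ys ymin]] := eqVneq s [::].
  by exists x => [|y]; rewrite ?inE // => /eqP->.
have [xy|yx] := leqP (f x) (f y).
  exists x => [|z]; first exact: mem_head.
  by rewrite inE => /orP[/eqP->//|/ymin]; apply: leq_trans.
exists y => [|z]; first by rewrite inE ys orbT.
by rewrite inE => /orP[/eqP->|/ymin]; [apply: ltnW|].
Qed.

Lemma fmem_symdiff g h z : fmem (fsymdiff g h) z = fmem g z (+) fmem h z.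
Proof.
rewrite /fmem /= mem_sort mem_undup mem_cat !mem_filter.
by case: (z \in sval g); case: (z \in sval h).
Qed.

Lemma finZset_ext (g h : finZset) : fmem g =1 fmem h -> g = h.
Proof.
case: g h => [s s_lt] [t t_lt] /= st.
have st_eq : s = t.
  apply: (irr_sorted_eq (leT := <%O)) s_lt t_lt st; first exact: lt_trans.
  by move=> x; rewrite /= ltxx.
by subst t; congr exist; apply: bool_irrelevance.
Qed.

Definition finZ1 (n : int) : finZset := exist _ [:: n] (erefl true).

Lemma fmem1 n z : fmem (finZ1 n) z = (z == n).
Proof. by rewrite /fmem /= inE. Qed.

Lemma fmem_zpow_odd x (m : int) w : odd `|m|%N ->
  fmem (zpow fsymdiff finZinv fempty x m) w = fmem x w.
Proof.
have fmem_iter n : fmem (iter n (fsymdiff x) fempty) w = odd n && fmem x w.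
  by elim: n => //= n IH; rewrite fmem_symdiff IH; case: (odd n); case: (fmem x w).
by case: m => n odd_n; rewrite /zpow /finZinv fmem_iter; move: odd_n => /= ->.
Qed.

Lemma fmem_foldr (l : seq finZset) w :
  fmem (foldr fsymdiff fempty l) w = \big[addb/false]_(g <- l) fmem g w.
Proof. by elim: l => [|g l IH]; rewrite ?big_nil ?big_cons //= fmem_symdiff IH. Qed.

Lemma fmem_perm_product k (m : 'I_k -> int) (x : 'I_k -> finZset) s w :
  (forall i, odd `|m i|%N) ->
  fmem (perm_product fsymdiff finZinv fempty m x s) w = \big[addb/false]_(i < k) fmem (x i) w.
Proof.
move=> m_odd; rewrite /perm_product fmem_foldr big_map.
rewrite (eq_bigr (fun i => fmem (x (s i)) w)) => [|i _]; last exact: fmem_zpow_odd.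
rewrite big_enum /= [RHS](reindex_inj (@perm_inj _ s)) /=.
by apply: eq_bigl => i; rewrite inE.
Qed.

Local Open Scope ring_scope.

Definition bounded_by (M : int -> bool) (R : int) := forall w, M w -> `|w| <= R.

Lemma finZset_bounded (g : finZset) : exists2 R, 0 <= R & bounded_by (fmem g) R.
Proof.
exists (\sum_(x <- sval g) `|x|); first by rewrite sumr_ge0.
rewrite /bounded_by /fmem; elim: (sval g) => [|x s IH] w //.
rewrite inE big_cons => /orP[/eqP ->|/IH]; first by rewrite lerDl sumr_ge0.
by move/le_trans; apply; rewrite lerDr.
Qed.

Definition zrange (R : nat) : seq int := [seq i%:Z - R%:Z | i <- iota 0 (2 * R).+1].

Lemma zrange_lt_sorted R : sorted <%O (zrange R).
Proof.
apply: (homo_sorted (e := ltn)); last exact: iota_ltn_sorted.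
by move=> x y xy /=; rewrite ltrD2r ltz_nat.
Qed.

Lemma mem_zrange R w : `|w| <= R%:Z -> w \in zrange R.
Proof.
move=> wR; apply/mapP; exists (absz (w + R%:Z)); last by lia.
rewrite mem_iota add0n ltnS; lia.
Qed.

Definition finZmask R (m : bitseq) : finZset :=
  exist _ (mask m (zrange R)) (subseq_lt_sorted (mask_subseq m _) (zrange_lt_sorted R)).

Lemma finZset_bounded_finite (R : nat) : exists L : seq finZset,
  forall g, bounded_by (fmem g) R%:Z -> g \in L.
Proof.
exists [seq finZmask R (val m) | m <- enum {: (size (zrange R)).-tuple bool}] => g gR.
apply/mapP; exists (map_tuple (fun w => w \in sval g) (in_tuple (zrange R))).
  exact: mem_enum.
apply: finZset_ext => z; rewrite /fmem.
change ((z \in sval g) = (z \in mask [seq w \in sval g | w <- zrange R] (zrange R))).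
rewrite -(filter_mask (fun w => w \in sval g)) mem_filter.
by case gz: (z \in sval g) => //=; rewrite mem_zrange // gR.
Qed.

Lemma cube_gap (a b : int) : a != b -> `|a| <= `|a ^+ 3 - b ^+ 3|.
Proof.
move=> neq_ab.
have -> : a ^+ 3 - b ^+ 3 = (a - b) * (a * a + a * b + b * b) by ring.
have sq_ge0 (x : int) : 0 <= x * x by nia.
have ab_ge1 : 1 <= `|a - b| by move: neq_ab; lia.
(* [4 (a^2 + ab + b^2) = (a + 2b)^2 + 3 a^2] *)
have q_ge_a : `|a| <= a * a + a * b + b * b.
  have := sq_ge0 (b + b + a); have := sq_ge0 b; have := sq_ge0 (b + 1); nia.
rewrite normrM (@ger0_norm _ (a * a + a * b + b * b)); nia.
Qed.

Lemma cube_roots_far (x y t a c R : int) : `|y| <= R -> `|t| <= R -> y != t ->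
  x - y = a ^+ 3 -> x - t = c ^+ 3 -> `|x| <= R + (R + R) ^+ 3.
Proof.
move=> yR tR neq_yt xya xtc.
have neq_ac : a != c by apply: contraNneq neq_yt => eq_ac; apply/eqP; lia.
have aR : `|a| <= R + R.
  apply: le_trans (cube_gap neq_ac) _.
  have -> : a ^+ 3 - c ^+ 3 = t - y by rewrite -xya -xtc; ring.
  by apply: le_trans (ler_normB _ _) _; apply: lerD.
have -> : x = y + a ^+ 3 by rewrite -xya; ring.
apply: le_trans (ler_normD _ _) _; apply: lerD => //.
by rewrite normrX lerXn2r // nnegrE (le_trans _ aR).
Qed.

(* [A_cube g] unfolds to [~ cube_pair (fmem g)]. *)
Definition cube_pair (M : int -> bool) : Prop :=
  exists x y : int, x - y != 0 /\ (exists z : int, x - y = z ^+ 3) /\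
    forall w, M w = (w == x) || (w == y).

Lemma cube_pair_partner M x : cube_pair M -> M x ->
  exists y, [/\ x != y, exists a, x - y = a ^+ 3 & forall w, M w = (w == x) || (w == y)].
Proof.
move=> [x0 [y0 [nz [[a xya] M2]]]]; rewrite M2 => /orP[]/eqP->.
- by exists y0; split=> //; [rewrite -subr_eq0 | exists a].
- exists x0; split; first by rewrite eq_sym -subr_eq0.
  + by exists (- a); rewrite -opprB xya; ring.
  + by move=> w; rewrite orbC.
Qed.

Lemma bounded_by_le M R R' : R <= R' -> bounded_by M R -> bounded_by M R'.
Proof. by move=> RR' MR w /MR /le_trans; apply. Qed.

Lemma bounded_by_addb M N R :
  bounded_by M R -> bounded_by N R -> bounded_by (fun w => M w (+) N w) R.
Proof. by move=> MR NR w; case Mw: (M w); [move=> _; apply: MR | apply: NR]. Qed.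

(* If [x] lies in [M] but not in [e], then its partners [y] in [M] and [t]
   in [M (+) e] both lie in [e], and they differ, otherwise [e] would be empty. *)
Lemma cube_pair_symdiff_bounded (M e : int -> bool) R :
  bounded_by e R -> (exists w, e w) -> cube_pair M -> cube_pair (fun w => M w (+) e w) ->
  bounded_by M (R + (R + R) ^+ 3).
Proof.
move=> eR [w0 e_w0] pairM pairMe x Mx.
have R_ge0 : 0 <= R by apply: le_trans (eR _ e_w0).
case ex: (e x); first by apply: le_trans (eR _ ex) _; rewrite lerDl exprn_ge0 ?addr_ge0.
have [y [neq_xy [a xya] M2]] := cube_pair_partner pairM Mx.
have Me_x : M x (+) e x by rewrite ex Mx.
have [t [neq_xt [c xtc] Me2]] := cube_pair_partner pairMe Me_x.
have neq_yt : y != t.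
  by apply/eqP => eq_yt; move: (Me2 w0); rewrite M2 -eq_yt e_w0; case: (_ || _).
have e_t : e t.
  by move: (Me2 t); rewrite M2 eqxx orbT ![t == _]eq_sym (negbTE neq_xt) (negbTE neq_yt).
have e_y : e y.
  move: (Me2 y); rewrite M2 eqxx orbT [y == x]eq_sym (negbTE neq_xy) (negbTE neq_yt).
  by case: (e y).
exact: cube_roots_far (eR _ e_y) (eR _ e_t) neq_yt xya xtc.
Qed.

Lemma eq_cube_pair M N : M =1 N -> cube_pair M -> cube_pair N.
Proof.
by move=> MN [x [y [nz [cube M2]]]]; exists x, y; do 2 split=> //; move=> w; rewrite -MN.
Qed.

Lemma cube_pairs_through_two_bounded (s : int -> bool) (u v g : finZset) R :
  bounded_by s R -> bounded_by (fmem u) R -> bounded_by (fmem v) R -> u != v ->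
  cube_pair (fun w => s w (+) fmem u w (+) fmem g w) ->
  cube_pair (fun w => s w (+) fmem v w (+) fmem g w) ->
  bounded_by (fmem g) (R + (R + R) ^+ 3).
Proof.
move=> sR uR vR neq_uv pair_u pair_v.
pose e w := fmem u w (+) fmem v w.
have [w0 e_w0] : exists w, e w.
  apply: NNPP => e0; move/eqP: neq_uv; apply; apply: finZset_ext => w.
  have /negP : ~~ e w by apply: contra_notN e0 => ew; exists w.
  by rewrite /e; case: (fmem u w); case: (fmem v w).
have eR : bounded_by e R by apply: bounded_by_addb.
have pair_ue : cube_pair (fun w => (s w (+) fmem u w (+) fmem g w) (+) e w).
  apply: eq_cube_pair pair_v => w; rewrite /e.
  by case: (s w); case: (fmem u w); case: (fmem v w); case: (fmem g w).
have MB := cube_pair_symdiff_bounded eR (ex_intro _ w0 e_w0) pair_u pair_ue.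
have RB : R <= R + (R + R) ^+ 3.
  by rewrite lerDl exprn_ge0 // addr_ge0 // (le_trans _ (eR _ e_w0)).
move=> w g_w; case M_w : (s w (+) fmem u w (+) fmem g w); first exact: MB.
move: M_w; rewrite g_w; case s_w : (s w); case u_w : (fmem u w) => // _.
  by apply: le_trans RB; apply: sR.
by apply: le_trans RB; apply: uR.
Qed.

Lemma exists_symdiff_not_cube_pair (s : int -> bool) R (Y : finZset -> Prop) :
  bounded_by s R -> ~ finite_set Y ->
  exists u v, [/\ Y u, Y v, u != v & ~ cube_pair (fun w => s w (+) fmem u w (+) fmem v w)].
Proof.
move=> sR infY; apply: NNPP => no_pair.
have pairs u v : Y u -> Y v -> u != v -> cube_pair (fun w => s w (+) fmem u w (+) fmem v w).
  by move=> Yu Yv neq_uv; apply: NNPP => not_pair; apply: no_pair; exists u, v.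
have [u0 Yu0 _] := nonfinite_notin [::] infY.
have [v1 Yv1] := nonfinite_notin [:: u0] infY; rewrite inE eq_sym => neq_uv.
have [Ru Ru_ge0 u0R] := finZset_bounded u0.
have [Rv Rv_ge0 v1R] := finZset_bounded v1.
set R1 := `|R| + Ru + Rv.
have [sR1 u0R1 v1R1] : [/\ bounded_by s R1, bounded_by (fmem u0) R1 & bounded_by (fmem v1) R1].
  by split; [apply: bounded_by_le sR | apply: bounded_by_le u0R | apply: bounded_by_le v1R]; lia.
have [L LB] := finZset_bounded_finite (absz (R1 + (R1 + R1) ^+ 3)).
apply: infY; exists [:: u0, v1 & L] => g Yg; apply/In_memP.
rewrite !inE; case: eqP => //= /eqP neq_gu; case: eqP => //= /eqP neq_gv.
apply: LB; apply: bounded_by_le (cube_pairs_through_two_bounded sR1 u0R1 v1R1 neq_uv _ _).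
- by rewrite gez0_abs // addr_ge0 ?exprn_ge0 ?addr_ge0 //; lia.
- by apply: pairs; rewrite // eq_sym.
- by apply: pairs; rewrite // eq_sym.
Qed.
Theorem ramsey_product_cube_pair_free k (m : 'I_k -> int) :
  (2 <= k)%N -> (forall i, odd `|m i|%N) ->
  ramsey_product_subset fsymdiff finZinv fempty m A_cube.
Proof.
move=> k_ge2 m_odd X infX.
have [l [size_l uniq_l lX]] := nonfinite_uniq_seq (k - 2) infX.
have [R _ sR] := finZset_bounded (foldr fsymdiff fempty l).
pose Y g := X g /\ g \notin l.
have infY : ~ finite_set Y.
  move=> [L LY]; apply: infX; exists (L ++ l) => g Xg; apply/In_memP; rewrite mem_cat.
  by apply/orP; case: (boolP (g \in l)) => g_l; [right | left; apply/In_memP/LY].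
have [u [v [[Xu u_l] [Xv v_l] neq_uv not_pair]]] := exists_symdiff_not_cube_pair sR infY.
pose r := l ++ [:: u; v].
have size_r : size r = k by rewrite size_cat size_l /=; lia.
have uniq_r : uniq r.
  by rewrite cat_uniq uniq_l /= inE negb_or neq_uv orbF (negbTE u_l) (negbTE v_l).
exists (fun i => nth fempty r i); split; [|split].
- by move=> i j /eqP; rewrite nth_uniq ?size_r // => /eqP/val_inj.
- move=> i; have : nth fempty r i \in r by rewrite mem_nth // size_r.
  by rewrite mem_cat => /orP[/lX //|]; rewrite !inE => /orP[]/eqP->.
- move=> s; apply: contra_not not_pair; apply: eq_cube_pair => w.
  rewrite fmem_perm_product // -(big_mkord xpredT (fun i => fmem (nth fempty r i) w)).
  rewrite -size_r -(big_nth fempty xpredT (fun g => fmem g w)) big_cat /= !big_cons big_nil.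
  by rewrite fmem_foldr addbF addbA.
Qed.

Lemma poly_bounded (p : {poly int}) (N : nat) :
  exists B : nat, forall y, `|y| <= N%:Z -> `|p.[y]| <= B%:Z.
Proof.
exists (absz (\sum_(i < size p) `|p`_i| * N%:Z ^+ i)) => y yN.
rewrite gez0_abs ?sumr_ge0 // => [|i _]; last by rewrite mulr_ge0 ?exprn_ge0.
rewrite horner_coef; apply: le_trans (ler_norm_sum _ _ _) _; apply: ler_sum => i _.
by rewrite normrM normrX ler_wpM2l // lerXn2r ?nnegrE.
Qed.

Definition poly_pattern (P : seq {poly int}) (C : Type) (chi : int -> C) (N : nat) (a z : int) :=
  [/\ 1 <= z <= N%:Z, `|a| <= N%:Z &
      forall q, q \in P -> `|a + q.[z]| <= N%:Z /\ chi (a + q.[z]) = chi a].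

Definition poly_vdW (P : seq {poly int}) : Prop :=
  forall C : finType, exists N : nat, forall chi : int -> C, exists a z, poly_pattern P chi N a z.

Definition color_focused (P : seq {poly int}) (p : {poly int}) (C : eqType) (chi : int -> C)
    (K : nat) (b : int) (ds : seq int) :=
  [/\ `|b| <= K%:Z,
      forall d, d \in ds -> 1 <= d <= K%:Z /\
        forall q, q \in P -> `|b + q.[d]| <= K%:Z /\ chi (b + q.[d]) = chi (b + p.[d])
    & uniq [seq chi (b + p.[d]) | d <- ds]].

Definition pattern_or_focused (P : seq {poly int}) (p : {poly int}) (s : nat) :=
  forall C : finType, exists K : nat, forall chi : int -> C,
    (exists a z, poly_pattern P chi K a z) \/
    (exists b ds, size ds = s /\ color_focused P p chi K b ds).

Lemma poly_pattern_shift P C (chi : int -> C) (N K : nat) u a z :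
  `|u| <= N%:Z -> poly_pattern P (fun x => chi (u + x)) K a z ->
  poly_pattern P chi (N + K) (u + a) z.
Proof.
move=> uN [/andP[z_ge1 zK] aK qP]; split; first (by apply/andP; split; lia); first lia.
by move=> q /qP[qK chi_q]; rewrite -addrA chi_q; split=> //; lia.
Qed.

Lemma poly_pattern_le P (C : Type) (chi : int -> C) (N N' : nat) a z :
  (N <= N')%N -> poly_pattern P chi N a z -> poly_pattern P chi N' a z.
Proof.
move=> NN' [/andP[z_ge1 zN] aN qP]; have le_N : N%:Z <= N'%:Z by rewrite lez_nat.
split; [apply/andP; split=> // | |]; try exact: le_trans le_N.
by move=> q /qP[qN ->]; split=> //; apply: le_trans le_N.
Qed.

Lemma color_focused_pattern P p (C : eqType) (chi : int -> C) K b ds :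
  color_focused P p chi K b ds -> chi b \in [seq chi (b + p.[d]) | d <- ds] ->
  exists z, poly_pattern P chi K b z.
Proof.
move=> [bK dsK _] /mapP[d /dsK[dK qP] chib]; exists d; split=> // q /qP[qK ->].
by rewrite chib.
Qed.

Lemma pattern_or_focused0 P p : pattern_or_focused P p 0.
Proof. by move=> C; exists 0%N => chi; right; exists 0, [::]. Qed.

(* Taking [s = #|C|.+1] rules out a focused family, since its colours are distinct. *)
Lemma poly_vdW_of_focused P p : (forall s, pattern_or_focused P p s) -> poly_vdW P.
Proof.
move=> focusP C; have [K KP] := focusP #|C|.+1 C; exists K => chi.
case: (KP chi) => // -[b [ds [size_ds [_ _ uniq_chi]]]].
move/card_uniqP: uniq_chi; rewrite size_map size_ds => card_chi.
by have := max_card (mem [seq chi (b + p.[d]) | d <- ds]); rewrite card_chi ltnn.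
Qed.

Definition pet_diff (q p : {poly int}) (c : int) : {poly int} :=
  q \Po ('X + c%:P) - (q.[c])%:P - p.

Lemma horner_pet_diff q p c y : (pet_diff q p c).[y] = q.[y + c] - q.[c] - p.[y].
Proof. by rewrite /pet_diff !hornerE horner_comp !hornerE. Qed.

Definition pet_family (P : seq {poly int}) (p : {poly int}) (K : nat) : seq {poly int} :=
  [seq r <- [seq pet_diff q p c%:Z | q <- P, c <- iota 0 K.+1] | r != 0].

Lemma pet_familyP P p K r : r \in pet_family P p K ->
  exists q c, [/\ q \in P, r = pet_diff q p c & r != 0].
Proof.
rewrite mem_filter => /andP[nz /allpairsP[[q c] [qP _ /= eq_r]]].
by exists q, c%:Z; rewrite -eq_r.
Qed.

(* [window chi K v] records [chi] on [v + [-K, K]]; since patterns and focused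
   families are bounded by [K], this finite recolouring is what keeps them. *)
Definition window (C : Type) (chi : int -> C) (K : nat) (v : int) : {ffun 'I_(2 * K).+1 -> C} :=
  [ffun j : 'I_(2 * K).+1 => chi (v + (j%:Z - K%:Z))].

Lemma window_eq (C : Type) (chi : int -> C) (K : nat) u t x :
  window chi K (u + t) = window chi K u -> `|x| <= K%:Z -> chi (u + t + x) = chi (u + x).
Proof.
move=> eq_win xK; have jK : (absz (x + K%:Z)%R < (2 * K).+1)%N by lia.
have := congr1 (fun f : {ffun _ -> C} => f (Ordinal jK)) eq_win; rewrite !ffunE /=.
by have -> : (absz (x + K%:Z))%:Z - K%:Z = x by lia.
Qed.

Lemma window_recurrence P p (C : finType) (chi : int -> C) (K N : nat) u y :
  poly_pattern (pet_family P p K) (window chi K) N u y ->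
  forall q c, q \in P -> (c <= K)%N -> `|u + (pet_diff q p c%:Z).[y]| <= N%:Z /\
    forall x, `|x| <= K%:Z -> chi (u + (pet_diff q p c%:Z).[y] + x) = chi (u + x).
Proof.
move=> [_ uN rec] q c qP cK.
have [->|nz] := eqVneq (pet_diff q p c%:Z) 0; first by rewrite horner0 addr0.
have [rN win] : `|u + (pet_diff q p c%:Z).[y]| <= N%:Z /\
                window chi K (u + (pet_diff q p c%:Z).[y]) = window chi K u.
  apply: rec; rewrite mem_filter nz.
  by apply: (allpairs_f (fun q c => pet_diff q p c%:Z)) => //; rewrite mem_iota.
by split=> // x; apply: window_eq.
Qed.

(* The focusing step of Walters' proof: translating the differences along the
   recurrence [u + (pet_diff q p c).[y]] moves every focused family one step
   further and adds the new focal point [u + b] itself. *)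
Lemma color_focused_extend P p (C : eqType) (chi : int -> C) (K N B : nat) u y b ds :
  p \in P -> (forall q, q \in P -> q.[0] = 0) ->
  `|u| <= N%:Z -> 1 <= y <= N%:Z -> `|p.[y]| <= B%:Z ->
  (forall q c, q \in P -> (c <= K)%N -> `|u + (pet_diff q p c%:Z).[y]| <= N%:Z /\
    forall x, `|x| <= K%:Z -> chi (u + (pet_diff q p c%:Z).[y] + x) = chi (u + x)) ->
  color_focused P p (fun x => chi (u + x)) K b ds ->
  chi (u + b) \notin [seq chi (u + (b + p.[d])) | d <- ds] ->
  color_focused P p chi (N + K + B) (u + b - p.[y]) (rcons [seq d + y | d <- ds] y).
Proof.
move=> pP P0 uN /andP[y_ge1 yN] pyB rec [bK dsK uniq_ds] new_b.
have moved d q : d \in ds -> q \in P ->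
    `|u + b - p.[y] + q.[d + y]| <= (N + K)%:Z /\
    chi (u + b - p.[y] + q.[d + y]) = chi (u + (b + p.[d])).
  move=> ds_d qP; have [/andP[d_ge1 dK] /(_ q qP)[bqK <-]] := dsK d ds_d.
  have [rN rec_d] := rec q (absz d) qP (ltac:(lia) : (absz d <= K)%N).
  have abs_d : (absz d)%:Z = d by lia.
  rewrite abs_d in rN rec_d.
  have -> : u + b - p.[y] + q.[d + y] = u + (pet_diff q p d).[y] + (b + q.[d]).
    by rewrite horner_pet_diff (addrC y d); ring.
  by rewrite rec_d // PoszD; split=> //; apply: le_trans (ler_normD _ _) (lerD rN bqK).
have focal q : q \in P ->
    `|u + b - p.[y] + q.[y]| <= (N + K)%:Z /\ chi (u + b - p.[y] + q.[y]) = chi (u + b).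
  move=> qP; have [rN rec_0] := rec q 0%N qP (leq0n _).
  have -> : u + b - p.[y] + q.[y] = u + (pet_diff q p 0).[y] + b.
    by rewrite horner_pet_diff addr0 (P0 q qP); ring.
  by rewrite rec_0 // PoszD; split=> //; apply: le_trans (ler_normD _ _) (lerD rN bK).
split; first lia.
- move=> d'; rewrite mem_rcons inE => /orP[/eqP->|/mapP[d ds_d ->]].
    split; first lia.
    move=> q qP; have [qK ->] := focal q qP; have [_ ->] := focal p pP.
    by split=> //; apply: le_trans qK _; rewrite lez_nat leq_addr.
  have [/andP[d_ge1 dK] _] := dsK d ds_d.
  split; first lia.
  move=> q qP; have [qK ->] := moved d q ds_d qP; have [_ ->] := moved d p ds_d pP.
  by split=> //; apply: le_trans qK _; rewrite lez_nat leq_addr.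
- rewrite map_rcons (focal p pP).2 -map_comp rcons_uniq.
  rewrite (@eq_in_map _ _ _ (fun d => chi (u + (b + p.[d]))) ds).1 ?new_b //.
  by move=> d ds_d /=; rewrite (moved d p ds_d pP).2.
Qed.

Lemma pattern_or_focused_step P p s : p \in P -> (forall q, q \in P -> q.[0] = 0) ->
  (forall K, poly_vdW (pet_family P p K)) ->
  pattern_or_focused P p s -> pattern_or_focused P p s.+1.
Proof.
move=> pP P0 vdW_pet focus C.
have [K KP] := focus C.
have [N NP] := vdW_pet K {ffun 'I_(2 * K).+1 -> C}.
have [B pB] := poly_bounded p N.
exists (N + K + B)%N => chi.
have [u [y pat]] := NP (window chi K).
have [/andP[y_ge1 yN] uN _] := pat.
have NKB : (N + K <= N + K + B)%N by rewrite leq_addr.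
case: (KP (fun x => chi (u + x))) => [[a [z pat_a]]|[b [ds [size_ds foc]]]].
  by left; exists (u + a), z; apply: poly_pattern_le NKB (poly_pattern_shift uN pat_a).
have [old|new] := boolP (chi (u + b) \in [seq chi (u + (b + p.[d])) | d <- ds]).
  left; have [z pat_b] := color_focused_pattern foc old.
  by exists (u + b), z; apply: poly_pattern_le NKB (poly_pattern_shift uN pat_b).
right; exists (u + b - p.[y]), (rcons [seq d + y | d <- ds] y).
split; first by rewrite size_rcons size_map size_ds.
apply: color_focused_extend foc new => //; first by apply/andP.
  by apply: pB; rewrite ger0_norm; lia.
exact: window_recurrence pat.
Qed.

Section SizeLeadCoef.
Variable R : idomainType.
Implicit Types a b q : {poly R}.

Lemma size_lead_coefB_eq_size a b : size a = size b -> lead_coef a != lead_coef b ->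
  size (a - b) = size a /\ lead_coef (a - b) = lead_coef a - lead_coef b.
Proof.
move=> eq_size neq_lead; set n := size a.
have coef_top : (a - b)`_n.-1 = lead_coef a - lead_coef b.
  by rewrite coefB /lead_coef -eq_size.
have size_le : (size (a - b)%R <= n)%N.
  by apply: leq_trans (size_polyD _ _) _; rewrite size_polyN -eq_size maxnn.
have n_gt0 : (0 < n)%N.
  rewrite lt0n; apply: contraNneq neq_lead => n0.
  have /eqP a0 : a == 0 by rewrite -size_poly_eq0 -/n n0.
  have /eqP b0 : b == 0 by rewrite -size_poly_eq0 -eq_size -/n n0.
  by rewrite a0 b0.
have size_ge : (n <= size (a - b)%R)%N.
  rewrite -(ltn_predK n_gt0) ltnNge; apply: contra neq_lead => /(nth_default 0).
  by rewrite coef_top => /eqP; rewrite subr_eq0.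
have size_eq : size (a - b) = n by apply/eqP; rewrite eqn_leq size_le size_ge.
by rewrite /lead_coef size_eq -/(lead_coef a) -coef_top.
Qed.

Lemma size_polyB_eq_lead a b : size a = size b -> a != 0 -> lead_coef a = lead_coef b ->
  (size (a - b)%R < size a)%N.
Proof.
move=> eq_size nz_a eq_lead; rewrite (polySpred nz_a) ltnS; apply/leq_sizeP => j.
have lead_b : b`_(size a).-1 = lead_coef b by rewrite lead_coefE eq_size.
rewrite leq_eqVlt => /orP[/eqP <-|lt_j].
  by rewrite coefB lead_b -lead_coefE eq_lead subrr.
by rewrite coefB !nth_default ?subrr // -?eq_size (polySpred nz_a).
Qed.

Lemma size_lead_coef_shift q c : (1 < size q)%N ->
  size (q \Po ('X + c%:P) - (q.[c])%:P) = size q /\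
  lead_coef (q \Po ('X + c%:P) - (q.[c])%:P) = lead_coef q.
Proof.
move=> q_gt1.
have size_comp : size (q \Po ('X + c%:P)) = size q := size_comp_poly2 _ (size_XaddC _).
have lt_const : (size (- (q.[c])%:P) < size (q \Po ('X + c%:P)))%N.
  by rewrite size_comp size_polyN size_polyC; apply: leq_ltn_trans q_gt1; apply: leq_b1.
rewrite size_polyDl // lead_coefDl // size_comp; split=> //.
by rewrite lead_coef_comp ?size_XaddC // lead_coefXaddC expr1n mulr1.
Qed.

End SizeLeadCoef.

Section PetDiff.
Variables (q p : {poly int}) (c : int).
Hypothesis q_gt1 : (1 < size q)%N.

Let shift_q := size_lead_coef_shift c q_gt1.

Lemma size_pet_diff_le : (size p <= size q)%N -> (size (pet_diff q p c) <= size q)%N.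
Proof.
move=> pq; apply: leq_trans (size_polyD _ _) _.
by rewrite size_polyN shift_q.1 geq_max leqnn.
Qed.

Lemma size_lead_pet_diff_gt : (size p < size q)%N ->
  size (pet_diff q p c) = size q /\ lead_coef (pet_diff q p c) = lead_coef q.
Proof.
move=> pq; have [size_s lead_s] := shift_q.
have lt_p : (size (- p) < size (q \Po ('X + c%:P) - (q.[c])%:P)%R)%N by rewrite size_polyN size_s.
by rewrite /pet_diff size_polyDl // lead_coefDl // size_s lead_s.
Qed.

Lemma size_lead_pet_diff_eq : size p = size q -> lead_coef p != lead_coef q ->
  size (pet_diff q p c) = size q /\ lead_coef (pet_diff q p c) = lead_coef q - lead_coef p.
Proof.
move=> pq neq_lead; have [size_s lead_s] := shift_q.
rewrite -size_s -lead_s; apply: size_lead_coefB_eq_size; first by rewrite size_s.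
by rewrite lead_s eq_sym.
Qed.

Lemma size_pet_diff_eq_lead : size p = size q -> lead_coef p = lead_coef q ->
  (size (pet_diff q p c) < size q)%N.
Proof.
move=> pq eq_lead; have [size_s lead_s] := shift_q.
rewrite -size_s; apply: size_polyB_eq_lead; rewrite ?size_s ?lead_s //.
by rewrite -size_poly_gt0 size_s; apply: ltnW.
Qed.

End PetDiff.

Definition nonzero_vanishing_at0 (P : seq {poly int}) := forall q, q \in P -> q != 0 /\ q.[0] = 0.

Lemma size_gt1_vanishing_at0 (q : {poly int}) : q != 0 -> q.[0] = 0 -> (1 < size q)%N.
Proof.
move=> nz_q q0; rewrite ltnNge; apply: contra nz_q => size_q.
have top0 : (size q).-1 = 0%N by case: (size q) size_q => [|[]].
by rewrite -lead_coef_eq0 lead_coefE top0 -horner_coef0 q0.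
Qed.

Lemma pet_family_vanishing_at0 P p K :
  nonzero_vanishing_at0 P -> p \in P -> nonzero_vanishing_at0 (pet_family P p K).
Proof.
move=> P_adm pP r /pet_familyP[q [c [qP -> nz]]]; split=> //.
by rewrite horner_pet_diff add0r subrr (P_adm p pP).2 subr0.
Qed.

Definition lead_coefs (P : seq {poly int}) (j : nat) :=
  undup [seq lead_coef q | q : {poly int} <- P & size q == j].

(* [weight P j] counts the leading coefficients of the members of [P] of degree
   [j.-1], up to repetition: one entry of Bergelson's weight vector. *)
Definition weight (P : seq {poly int}) (j : nat) := size (lead_coefs P j).

Lemma size_undup_subset_map (T U : eqType) (f : T -> U) (s : seq T) (t : seq U) :
  {subset t <= map f s} -> (size (undup t) <= size (undup s))%N.
Proof.
move=> ts; rewrite -(size_map f); apply: uniq_leq_size; first exact: undup_uniq.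
by move=> x; rewrite mem_undup => /ts /mapP[y ys ->]; rewrite map_f ?mem_undup.
Qed.

Section PetFamilyWeight.
Variables (P : seq {poly int}) (p : {poly int}) (K : nat).
Hypotheses (P_adm : nonzero_vanishing_at0 P) (pP : p \in P).
Hypothesis p_min : forall q, q \in P -> (size p <= size q)%N.

Let size_gt1 q : q \in P -> (1 < size q)%N.
Proof. by move=> /P_adm[nz q0]; apply: size_gt1_vanishing_at0. Qed.

Lemma size_pet_family r : r \in pet_family P p K -> exists2 q, q \in P & (size r <= size q)%N.
Proof.
move=> /pet_familyP[q [c [qP -> _]]]; exists q => //.
exact: size_pet_diff_le (size_gt1 qP) (p_min qP).
Qed.

Lemma weight_pet_family_le j : (size p < j)%N -> (weight (pet_family P p K) j <= weight P j)%N.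
Proof.
move=> pj; apply: (@size_undup_subset_map _ _ id); rewrite map_id.
move=> x /mapP[r]; rewrite mem_filter => /andP[/eqP size_r /pet_familyP[q [c [qP eq_r _]]]] ->.
have [pq|qp] := ltnP (size p) (size q).
  have [size_pq lead_pq] := size_lead_pet_diff_gt c (size_gt1 qP) pq.
  by rewrite eq_r lead_pq map_f // mem_filter qP -size_pq -eq_r size_r eqxx.
have size_qp : size q = size p by apply/eqP; rewrite eqn_leq qp p_min.
have := size_pet_diff_le c (size_gt1 qP) (p_min qP).
by rewrite -eq_r size_r size_qp leqNgt pj.
Qed.

(* The leading coefficients of degree [size p] in the family are differences
   [lead_coef q - lead_coef p] with [lead_coef q != lead_coef p]. *)
Lemma weight_pet_family_lt : (weight (pet_family P p K) (size p) < weight P (size p))%N.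
Proof.
set L := [seq lead_coef q | q : {poly int} <- P & size q == size p].
apply: (@leq_ltn_trans (size (undup [seq a <- L | a != lead_coef p]))).
  apply: (@size_undup_subset_map _ _ (fun a => a - lead_coef p)).
  move=> x /mapP[r]; rewrite mem_filter => /andP[/eqP size_r /pet_familyP[q [c [qP eq_r _]]]] ->.
  have [pq|qp] := ltnP (size p) (size q).
    have [size_pq _] := size_lead_pet_diff_gt c (size_gt1 qP) pq.
    by move: pq; rewrite -size_pq -eq_r size_r ltnn.
  have size_qp : size p = size q by apply/eqP; rewrite eqn_leq qp p_min.
  have [eq_lead|neq_lead] := eqVneq (lead_coef p) (lead_coef q).
    have := size_pet_diff_eq_lead c (size_gt1 qP) size_qp eq_lead.
    by rewrite -eq_r size_r size_qp ltnn.
  have [_ lead_r] := size_lead_pet_diff_eq c (size_gt1 qP) size_qp neq_lead.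
  rewrite eq_r lead_r (map_f (fun a => a - lead_coef p)) // mem_filter eq_sym neq_lead.
  by rewrite map_f // mem_filter qP size_qp eqxx.
rewrite -filter_undup size_filter -[X in (_ < X)%N](count_predC (fun a => a != lead_coef p)).
rewrite -{1}[count _ _]addn0 ltn_add2l -has_count; apply/hasP; exists (lead_coef p) => /=.
  by rewrite mem_undup map_f // mem_filter pP eqxx.
by rewrite eqxx.
Qed.

End PetFamilyWeight.

(* PET induction: the weights of [pet_family P p K] are dominated by those of [P]
   when [p] has minimal degree in [P]. *)
Theorem polynomial_van_der_Waerden P : nonzero_vanishing_at0 P -> poly_vdW P.
Proof.
suff vdW_below n : forall Q, nonzero_vanishing_at0 Q -> (forall q, q \in Q -> (size q < n)%N) ->
    poly_vdW Q.
  move=> P_adm; apply: (vdW_below (\max_(q <- P) size q).+1) => // q qP.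
  by rewrite ltnS; apply: leq_bigmax_seq.
apply: (@dominated_ind _ weight n (fun Q => nonzero_vanishing_at0 Q ->
    (forall q, q \in Q -> (size q < n)%N) -> poly_vdW Q)) => Q IH Q_adm Qn.
have [->|nz_Q] := eqVneq Q [::].
  by move=> C; exists 1%N => chi; exists 0, 1.
have [p pQ p_min] := exists_argmin_seq (fun q : {poly int} => size q) nz_Q.
apply: (@poly_vdW_of_focused _ p); elim=> [|s]; first exact: pattern_or_focused0.
apply: pattern_or_focused_step => // [q /Q_adm[] //|K].
apply: IH; first exists (size p); first exact: Qn.
- split; first exact: weight_pet_family_lt.
  by move=> i /andP[pi _]; apply: weight_pet_family_le.
- exact: pet_family_vanishing_at0.
- by move=> r /(size_pet_family Q_adm p_min)[q /Qn qn rq]; apply: leq_ltn_trans rq qn.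
Qed.

Lemma cube_recurrence (C : finType) (chi : int -> C) :
  exists a z : int, z != 0 /\ chi (a + z ^+ 3) = chi a.
Proof.
have cube_adm : nonzero_vanishing_at0 [:: 'X^3].
  move=> q; rewrite inE => /eqP->; rewrite hornerXn expr0n /=; split=> //.
  by rewrite -size_poly_eq0 size_polyXn.
have [N NP] := polynomial_van_der_Waerden cube_adm C.
have [a [z [/andP[z_ge1 _] _ /(_ 'X^3 (mem_head _ _))[_]]]] := NP chi.
by rewrite hornerXn => chi_cube; exists a, z; rewrite gt_eqF.
Qed.

Lemma large_cube_pair_difference (B : finZset -> Prop) : large fsymdiff B ->
  exists b1 b2, [/\ B b1, B b2 & cube_pair (fmem (fsymdiff b1 (finZinv b2)))].
Proof.
move=> [F FB].
have choose_fb n :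
    {fb : finZset * finZset | [/\ fb.1 \in F, B fb.2 & finZ1 n = fsymdiff fb.1 fb.2]}.
  apply: IndefiniteDescription.constructive_indefinite_description.
  by have [f [b [/In_memP fF [Bb ->]]]] := FB (finZ1 n); exists (f, b).
pose f n := (sval (choose_fb n)).1; pose b n := (sval (choose_fb n)).2.
have [a [z [z_nz same_f]]] := cube_recurrence (fun n => inord (index (f n) F) : 'I_(size F).+1).
have eq_f : f (a + z ^+ 3) = f a.
  have fF n : f n \in F by case: (svalP (choose_fb n)).
  move/(congr1 val): same_f; rewrite /= !inordK ?ltnS ?index_size // => eq_idx.
  by rewrite -(nth_index (f a) (fF _)) eq_idx nth_index.
have fmem_b n w : fmem (b n) w = fmem (f n) w (+) (w == n).
  have [_ _ /(congr1 (fmem^~ w))] := svalP (choose_fb n).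
  by rewrite fmem_symdiff fmem1 -/(f n) -/(b n) => ->; rewrite addKb.
have [_ Bb1 _] := svalP (choose_fb (a + z ^+ 3)); have [_ Bb2 _] := svalP (choose_fb a).
exists (b (a + z ^+ 3)), (b a); split=> //.
have diff_cube : a + z ^+ 3 - a = z ^+ 3 by rewrite addrC addKr.
exists (a + z ^+ 3), a; split; first by rewrite diff_cube expf_eq0.
split; first by exists z.
move=> w; rewrite fmem_symdiff !fmem_b eq_f.
have [->|neq_wa] := eqVneq w a; last by rewrite orbF; case: (fmem _ _); case: (_ == _).
have /negPf-> : a != a + z ^+ 3 by rewrite eq_sym -subr_eq0 diff_cube expf_eq0.
by case: (fmem _ _).
Qed.

Lemma neighbourhood_contains_BBinv (T : Type) (mul : T -> T -> T) (inv : T -> T) (e : T)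
    (open : (T -> Prop) -> Prop) (A : T -> Prop) :
  inv e = e -> mul e e = e -> is_group_topology mul inv open -> totally_bounded mul e open ->
  neighbourhood_of_e e open A -> exists B, large mul B /\ BBinv_sub mul inv B A.
Proof.
move=> inv_e mul_ee [[_ [_ openI]] [mul_cont inv_cont]] bounded [U [openU [Ue UA]]].
have Uee : U (mul e e) by rewrite mul_ee.
have [V [W [openV [openW [Ve [We VW_U]]]]]] := mul_cont U e e openU Uee.
pose B x := V x /\ W (inv x).
have openB : open B by apply: openI => //; apply: inv_cont.
exists B; split.
  by apply: bounded; exists B; split=> //; rewrite /B inv_e.
by move=> b1 b2 [Vb1 _] [_ Wb2]; apply/UA/VW_U.
Qed.

Local Close Scope ring_scope.

Theorem proposition5p4 :
  (forall (k : nat) (m : 'I_k -> int), 2 <= k -> (forall i, odd `|m i|%N) ->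
     ramsey_product_subset fsymdiff finZinv fempty m A_cube) /\
  (~ exists B : finZset -> Prop,
       large fsymdiff B /\ BBinv_sub fsymdiff finZinv B A_cube) /\
  (forall open : (finZset -> Prop) -> Prop,
     is_group_topology fsymdiff finZinv open ->
     totally_bounded fsymdiff fempty open ->
     ~ neighbourhood_of_e fempty open A_cube).
Proof.
have no_large : ~ exists B, large fsymdiff B /\ BBinv_sub fsymdiff finZinv B A_cube.
  move=> [B [/large_cube_pair_difference[b1 [b2 [Bb1 Bb2 pair]]] BBinv_A]].
  exact: BBinv_A b1 b2 Bb1 Bb2 pair.
split; first exact: ramsey_product_cube_pair_free.
split=> // open top bounded nbhd; apply: no_large.
have empty_symdiff : fsymdiff fempty fempty = fempty.
  by apply: finZset_ext => w; rewrite fmem_symdiff.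
by apply: (neighbourhood_contains_BBinv _ empty_symdiff top bounded nbhd).
Qed.
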